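(* Let $N\ge3$ and let both layers be the unweighted complete graph on $N$ nodes without self-loops. Consider the process described in the context started from the state $\boldsymbol{\xi}$ in which individual $1$ is the only cooperator in layer 1 and also the only mutant in layer 2. Let $\rho^{[1]}(\boldsymbol{\xi})$ be the probability that layer 1 eventually consists only of cooperators, and let $c>0$. Then $\left.\frac{\mathrm{d}}{\mathrm{d}\delta}\rho^{[1]}(\boldsymbol{\xi})\right|_{\delta=0}>0$ (spite is favored) if and only if $$\frac bc<-(N-1)+\frac{r-1}{c}\cdot\frac{2(N-1)^2}{N(2N-3)} .$$
   Context: $N$ individuals; in both layers $L\in\{1,2\}$, $w^{[L]}_{ij}=1$ for $i\ne j$ and $w^{[L]}_{ii}=0$. States $(x^{[1]},x^{[2]})\in\{0,1\}^N\times\{0,1\}^N$: $x^{[1]}_i=1$ means cooperator (else defector) in layer 1, $x^{[2]}_i=1$ means mutant (else resident) in layer 2. Payoff: $u_i=-c\,x^{[1]}_i+\frac{b}{N-1}\sum_{j\ne i}x^{[1]}_j+(r-1)x^{[2]}_i+1$ with $r\ge0$; fecundity $F_i=1+\delta u_i$, $\delta\ge0$. Each time step, simultaneously and independently in each layer $L$: choose $i$ uniformly at random, choose $j\neq i$ with probability $F_j/\sum_{k\ne i}F_k$, and set $x^{[L]}_i\leftarrow x^{[L]}_j$ (death-Birth updating in both layers). *)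

From HB Require Import structures.
From mathcomp Require Import all_boot all_order all_algebra.
From mathcomp Require Import all_classical all_reals all_analysis.
Set Implicit Arguments. Unset Strict Implicit. Unset Printing Implicit Defensive.
Import Order.TTheory GRing.Theory Num.Theory.
Import numFieldNormedType.Exports.
Local Open Scope ring_scope.

(* A layer configuration: x i = true means cooperator (layer 1) / mutant (layer 2). *)
Definition config (N : nat) := {ffun 'I_N -> bool}.
Definition state (N : nat) : finType := (config N * config N)%type.

Section Model.
Variables (R : realType) (N : nat) (b c r : R).

(* u_i = -c x1_i + b/(N-1) sum_{j<>i} x1_j + (r-1) x2_i + 1
   (complete graph without self-loops, w_ij = 1 for i <> j). *)
Definition payoff (s : state N) (i : 'I_N) : R :=
  - c * (s.1 i)%:R
  + b / (N%:R - 1) * \sum_(j < N | j != i) (s.1 j)%:R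
  + (r - 1) * (s.2 i)%:R + 1.

Definition fecundity (delta : R) (s : state N) (i : 'I_N) : R :=
  1 + delta * payoff s i.

Definition cupd (x : config N) (i : 'I_N) (v : bool) : config N :=
  [ffun k => if k == i then v else x k].

(* death-Birth update in one layer: probability to go from x to y, given
   fecundities F: i uniform, j <> i with prob F_j / sum_{k<>i} F_k, x_i <- x_j. *)
Definition dB_step (F : 'I_N -> R) (x y : config N) : R :=
  \sum_(i < N) \sum_(j < N | j != i)
     (N%:R)^-1 * (F j / \sum_(k < N | k != i) F k) * (y == cupd x i (x j))%:R.

Definition trans (delta : R) (s t : state N) : R :=
  dB_step (fecundity delta s) s.1 t.1 * dB_step (fecundity delta s) s.2 t.2.

Fixpoint transn (delta : R) (n : nat) (s t : state N) : R :=
  match n with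
  | 0%N => (s == t)%:R
  | n'.+1 => \sum_(u : state N) trans delta s u * transn delta n' u t
  end.

Definition allC_prob (delta : R) (s : state N) (n : nat) : R :=
  \sum_(t : state N | [forall i, t.1 i]) transn delta n s t.

(* rho^[1](s): probability that layer 1 eventually consists only of cooperators.
   The set of such states is absorbing, so this is the limit of allC_prob. *)
Definition rho1 (delta : R) (s : state N) : R := limn (allC_prob delta s).

(* xi: individual 1 (index 0) is the only cooperator in layer 1 and the
   only mutant in layer 2 *)
Definition xi_single : state N :=
  ([ffun k : 'I_N => nat_of_ord k == 0%N], [ffun k : 'I_N => nat_of_ord k == 0%N]).

End Model.

From HB Require Import structures.
From mathcomp Require Import all_boot all_order all_algebra.
From mathcomp Require Import all_classical all_reals all_analysis.
From mathcomp Require Import ring lra.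
Import Order.TTheory GRing.Theory Num.Theory.
Import numFieldNormedType.Exports.
Local Open Scope classical_set_scope.
Local Open Scope ring_scope.
Set Implicit Arguments. Unset Strict Implicit. Unset Printing Implicit Defensive.

(* At selection strength 0 both layers are neutral death-Birth chains: the
   frequency X of cooperators is a martingale, while the number A = i (N - i) of
   discordant pairs and the cross-layer covariance Y are eigenfunctions of the
   neutral kernel K0.  To first order in the selection strength d, the drift of X
   is d times a linear combination D of A and Y, so the Poisson equation
   K0 g - g = - D has the explicit solution g = alpha A + beta Y.  Then X + d g is
   harmonic for the kernel K_d up to an error d o(1), and N (N - 1) A is a
   Lyapunov function bounding the expected time to fixation; hence the fixation
   probability of cooperators is X + d g + o(d), and its derivative at 0 is g(xi),
   whose sign gives the stated condition. *)

Lemma cvg_sumr (R : realType) (T : Type) (D : set_system T) (FD : Filter D)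
    (I : finType) (P : pred I) (f : I -> T -> R) (l : I -> R) :
  (forall i, f i x @[x --> D] --> l i) ->
  \sum_(i | P i) f i x @[x --> D] --> \sum_(i | P i) l i.
Proof. by move=> f_cvg; apply: cvg_big => [|i _]; [exact: add_continuous | exact: f_cvg]. Qed.

Section FiniteMarkovChain.
Variables (R : realType) (S : finType) (K : S -> S -> R).

Definition kexp (f : S -> R) (s : S) : R := \sum_t K s t * f t.

Lemma kexpD f g s : kexp (fun t => f t + g t) s = kexp f s + kexp g s.
Proof. by rewrite /kexp -big_split; apply: eq_bigr => t _; rewrite mulrDr. Qed.

Lemma kexpB f g s : kexp (fun t => f t - g t) s = kexp f s - kexp g s.
Proof. by rewrite /kexp -sumrB; apply: eq_bigr => t _; rewrite mulrBr. Qed.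

Lemma kexpZ a f s : kexp (fun t => a * f t) s = a * kexp f s.
Proof. by rewrite /kexp mulr_sumr; apply: eq_bigr => t _; rewrite mulrCA. Qed.

Lemma kexp_sum (I : finType) (G : I -> S -> R) s :
  kexp (fun t => \sum_i G i t) s = \sum_i kexp (G i) s.
Proof.
rewrite /kexp exchange_big /=; apply: eq_bigr => t _; exact: mulr_sumr.
Qed.

Lemma iter_kexpB n f g s :
  iter n kexp (fun t => f t - g t) s = iter n kexp f s - iter n kexp g s.
Proof.
elim: n s => [//|n IH] s /=.
by rewrite -kexpB; congr (kexp _ s); apply: funext => t; rewrite IH.
Qed.

Lemma iter_kexpZ n a f s : iter n kexp (fun t => a * f t) s = a * iter n kexp f s.
Proof.
elim: n s => [//|n IH] s /=.
by rewrite -kexpZ; congr (kexp _ s); apply: funext => t; rewrite IH.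
Qed.

Lemma iter_kexp_telescope n h s :
  h s - iter n kexp h s = \sum_(m < n) iter m kexp (fun t => h t - kexp h t) s.
Proof.
elim: n => [|n IH]; first by rewrite big_ord0 subrr.
by rewrite big_ord_recr /= -IH iter_kexpB -iterSr /=; ring.
Qed.

Hypothesis K_ge0 : forall s t, 0 <= K s t.

Lemma kexp_le f g s : (forall t, f t <= g t) -> kexp f s <= kexp g s.
Proof. by move=> fg; apply: ler_sum => t _; apply: ler_wpM2l. Qed.

Lemma iter_kexp_le n f g s :
  (forall t, f t <= g t) -> iter n kexp f s <= iter n kexp g s.
Proof. by move=> fg; elim: n s => [|n IH] s /=; [exact: fg | exact: kexp_le]. Qed.

Lemma norm_iter_kexp_le n f s :
  `|iter n kexp f s| <= iter n kexp (fun t => `|f t|) s.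
Proof.
elim: n s => [|n IH] s //=.
apply: le_trans (ler_norm_sum _ _ _) _; apply: ler_sum => t _.
by rewrite normrM ger0_norm //; apply: ler_wpM2l.
Qed.

Hypothesis K_sum1 : forall s, \sum_t K s t = 1.

Lemma iter_kexp_cst n k s : iter n kexp (fun=> k) s = k.
Proof.
elim: n s => [//|n IH] s /=.
by rewrite /kexp; under eq_bigr do rewrite IH; rewrite -mulr_suml K_sum1 mul1r.
Qed.

(* [phi] approximates the probability of absorption in [C]: off the transient
   set [T] it is harmonic and equal to the indicator of [C], while on [T] its
   drift is incurred at most [w] times, [w] bounding the expected time in [T]. *)
Variables (T C : pred S) (phi w : S -> R).
Hypothesis T_closed : forall s, kexp (fun t => (T t)%:R) s <= (T s)%:R.
Hypothesis C_closed : forall s, (C s)%:R <= kexp (fun t => (C t)%:R) s.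
Hypothesis phi_harmonic_off_T : forall s, ~~ T s -> kexp phi s = phi s.
Hypothesis phi_eq_C_off_T : forall s, ~~ T s -> phi s = (C s)%:R.
Hypothesis w_ge0 : forall s, 0 <= w s.
Hypothesis w_lyapunov : forall s, (T s)%:R <= w s - kexp w s.

Let occ s n := iter n kexp (fun t => (T t)%:R) s.

Lemma occupation_sum_le s n : \sum_(m < n) occ s m <= w s.
Proof.
have w_n : 0 <= iter n kexp w s by rewrite -(iter_kexp_cst n 0 s); exact: iter_kexp_le.
suff : \sum_(m < n) occ s m <= w s - iter n kexp w s by lra.
by rewrite iter_kexp_telescope; apply: ler_sum => m _; exact: iter_kexp_le.
Qed.

Lemma occupation_antitone s m n : (m <= n)%N -> occ s n <= occ s m.
Proof.
move=> /subnK <-; elim: (n - m)%N => [//|k IH].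
apply: le_trans IH; rewrite addSn /occ iterSr.
by apply: iter_kexp_le => t; exact: T_closed.
Qed.

Lemma occupation_ge0 s n : 0 <= occ s n.
Proof. by rewrite -(iter_kexp_cst n 0 s); apply: iter_kexp_le => t; rewrite ler0n. Qed.

Lemma occupation_cvg0 s : occ s n @[n --> \oo] --> 0.
Proof.
apply: (@squeeze_cvgr _ _ _ _ (fun=> 0) (fun n => w s * harmonic n)).
- apply: nearW => n; rewrite occupation_ge0 /= ler_pdivlMr ?ltr0n // mulrC.
  apply: le_trans (occupation_sum_le s n.+1).
  rewrite mulr_natl -[n.+1 in X in X <= _]card_ord -sumr_const.
  by apply: ler_sum => m _; rewrite occupation_antitone // -ltnS.
- exact: cvg_cst.
- by rewrite -(mulr0 (w s)); apply: cvgMl_tmp; exact: cvg_harmonic.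
Qed.

Let eps := \sum_t `|kexp phi t - phi t|.
Let B := \sum_t `|(C t)%:R - phi t|.

Lemma le_sum_off_T (F : S -> R) s : (forall t, 0 <= F t) ->
  (forall t, ~~ T t -> F t = 0) -> F s <= (\sum_t F t) * (T s)%:R.
Proof.
move=> F_ge0 F0; case: (boolP (T s)) => Ts; last by rewrite F0 // mulr0.
by rewrite mulr1 (bigD1 s) //= lerDl sumr_ge0.
Qed.

Lemma hitting_prob_bound s n :
  `|iter n kexp (fun t => (C t)%:R) s - phi s| <= eps * w s + B * occ s n.
Proof.
have -> : iter n kexp (fun t => (C t)%:R) s - phi s =
    (iter n kexp phi s - phi s) + iter n kexp (fun t => (C t)%:R - phi t) s.
  by rewrite iter_kexpB; ring.
apply: le_trans (ler_normD _ _) _; apply: lerD.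
  rewrite distrC iter_kexp_telescope.
  apply: le_trans (ler_norm_sum _ _ _) _.
  apply: le_trans (_ : _ <= \sum_(m < n) eps * occ s m) _.
    apply: ler_sum => m _; apply: le_trans (norm_iter_kexp_le _ _ _) _.
    rewrite /occ -iter_kexpZ; apply: iter_kexp_le => t.
    rewrite distrC; apply: le_sum_off_T (fun u => `|kexp phi u - phi u|) t _ _ => // u Tu.
    by rewrite phi_harmonic_off_T // subrr normr0.
  rewrite -mulr_sumr ler_wpM2l ?sumr_ge0 //; exact: occupation_sum_le.
apply: le_trans (norm_iter_kexp_le _ _ _) _.
rewrite /occ -iter_kexpZ; apply: iter_kexp_le => t.
apply: le_sum_off_T (fun u => `|(C u)%:R - phi u|) t _ _ => // u Tu.
by rewrite phi_eq_C_off_T // subrr normr0.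
Qed.

Theorem hitting_prob_approx s :
  `|limn (fun n => iter n kexp (fun t => (C t)%:R) s) - phi s| <= eps * w s.
Proof.
set a := fun n => _.
have a_cvg : cvgn a.
  apply: nondecreasing_is_cvgn.
    apply/nondecreasing_seqP => n; rewrite /a iterSr.
    by apply: iter_kexp_le => t; exact: C_closed.
  exists 1 => _ [n _ <-]; rewrite -(iter_kexp_cst n 1 s); apply: iter_kexp_le => t.
  by case: (C t); rewrite ?ler01.
have dist_cvg : `|a n - phi s| @[n --> \oo] --> `|limn a - phi s|.
  by apply: cvg_norm; apply: cvgB => //; exact: cvg_cst.
have bound_cvg : eps * w s + B * occ s n @[n --> \oo] --> eps * w s.
  rewrite -[X in _ --> X]addr0 -(mulr0 B).
  by apply: cvgD; [exact: cvg_cst | apply: cvgMl_tmp; exact: occupation_cvg0].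
apply: ler_cvg_to dist_cvg bound_cvg _.
by apply: nearW => n; exact: hitting_prob_bound.
Qed.

End FiniteMarkovChain.

Section PairSums.
Variables (R : realType) (N : nat).

Definition pairsum (G : 'I_N -> 'I_N -> R) : R := \sum_(i < N) \sum_(j < N | j != i) G i j.

Lemma pairsum_ext G G' :
  (forall i j, j != i -> G i j = G' i j) -> pairsum G = pairsum G'.
Proof. by move=> GG'; apply: eq_bigr => i _; apply: eq_bigr => j; exact: GG'. Qed.

Lemma pairsumD G G' : pairsum (fun i j => G i j + G' i j) = pairsum G + pairsum G'.
Proof. by rewrite /pairsum -big_split; apply: eq_bigr => i _; rewrite -big_split. Qed.

Lemma pairsumB G G' : pairsum (fun i j => G i j - G' i j) = pairsum G - pairsum G'.
Proof. by rewrite /pairsum -sumrB; apply: eq_bigr => i _; rewrite -sumrB. Qed.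

Lemma pairsumZ a G : pairsum (fun i j => a * G i j) = a * pairsum G.
Proof. by rewrite /pairsum mulr_sumr; apply: eq_bigr => i _; rewrite mulr_sumr. Qed.

Lemma pairsumMr G a : pairsum (fun i j => G i j * a) = pairsum G * a.
Proof. by rewrite mulrC -pairsumZ; apply: pairsum_ext => i j _; rewrite mulrC. Qed.

Lemma sum_neq (u : 'I_N -> R) i : \sum_(j < N | j != i) u j = \sum_j u j - u i.
Proof. by rewrite [\sum_j u j](bigD1 i) //= addrC addrK. Qed.

Lemma pairsum_cst a : pairsum (fun _ _ => a) = N%:R * (N%:R - 1) * a.
Proof.
rewrite /pairsum; under eq_bigr do rewrite sum_neq sumr_const card_ord.
by rewrite sumr_const card_ord; ring.
Qed.

Lemma pairsum_diag0 G : (forall i, G i i = 0) -> pairsum G = \sum_i \sum_j G i j.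
Proof. by move=> G0; apply: eq_bigr => i _; rewrite sum_neq G0 subr0. Qed.

(* N^2 times the empirical covariance of u and v *)
Definition cov (u v : 'I_N -> R) : R :=
  N%:R * \sum_k u k * v k - (\sum_k u k) * (\sum_k v k).

Lemma covC u v : cov u v = cov v u.
Proof. by rewrite /cov [X in _ - X]mulrC; under eq_bigr do rewrite mulrC. Qed.

Lemma cov_affine_l a a' u v e w :
  cov (fun k => a * u k + a' * v k + e) w = a * cov u w + a' * cov v w.
Proof.
rewrite /cov.
have -> : \sum_k (a * u k + a' * v k + e) * w k =
    a * \sum_k u k * w k + a' * \sum_k v k * w k + e * \sum_k w k.
  by rewrite !mulr_sumr -!big_split; apply: eq_bigr => k _ /=; ring.
have -> : \sum_k (a * u k + a' * v k + e) = a * \sum_k u k + a' * \sum_k v k + \sum_(k < N) e.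
  by rewrite !mulr_sumr -!big_split.
by rewrite sumr_const card_ord; ring.
Qed.

Lemma cov_affine a u e a' v e' :
  cov (fun k => a * u k + e) (fun k => a' * v k + e') = a * a' * cov u v.
Proof.
have := cov_affine_l a 0 u u e (fun k => a' * v k + e'); rewrite mul0r addr0.
under eq_fun do rewrite mul0r addr0.
move=> ->; rewrite covC.
have := cov_affine_l a' 0 v v e' u; rewrite mul0r addr0.
under eq_fun do rewrite mul0r addr0.
by move=> ->; rewrite covC mulrA.
Qed.

Lemma cov_cstl e v : cov (fun=> e) v = 0.
Proof. by rewrite /cov -mulr_sumr sumr_const card_ord; ring. Qed.

Lemma covE u v : cov u v = \sum_k \sum_l (u k * v k - u k * v l).
Proof.
under eq_bigr do rewrite sumrB sumr_const card_ord -mulr_sumr -mulr_natr.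
by rewrite sumrB -!mulr_suml /cov; ring.
Qed.

Lemma sum_sum_diff (u : 'I_N -> R) : \sum_(i < N) \sum_(j < N) (u j - u i) = 0.
Proof.
under eq_bigr do rewrite sumrB sumr_const card_ord.
by rewrite sumrB sumr_const card_ord sumrMnl subrr.
Qed.

Lemma pairsum_diff u : pairsum (fun i j => u j - u i) = 0.
Proof. by rewrite pairsum_diag0 ?sum_sum_diff // => i; rewrite subrr. Qed.

Lemma pairsum_weighted_diff (a e : R) (u v : 'I_N -> R) :
  pairsum (fun i j => (a * u j + u i + e) * (v j - v i)) = (a - 1) * cov u v.
Proof.
rewrite pairsum_diag0 => [|i]; last by rewrite subrr mulr0.
rewrite (eq_bigr (fun i => a * \sum_j (u j * v j - u j * v i)
    - \sum_j (u i * v i - u i * v j) + e * \sum_j (v j - v i))); last first.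
  by move=> i _; rewrite !mulr_sumr -sumrB -big_split; apply: eq_bigr => j _ /=; ring.
rewrite big_split sumrB /= -!mulr_sumr sum_sum_diff exchange_big /= -!covE; ring.
Qed.

Lemma pairsum_sqr_diff u : pairsum (fun i j => (u j - u i) ^+ 2) = 2 * cov u u.
Proof.
rewrite pairsum_diag0 => [|i]; last by rewrite subrr expr0n.
rewrite (eq_bigr (fun i => \sum_j (u j * u j - u j * u i) + \sum_j (u i * u i - u i * u j)));
  last by move=> i _; rewrite -big_split; apply: eq_bigr => j _ /=; ring.
by rewrite big_split /= exchange_big /= -!covE; ring.
Qed.

End PairSums.

Section DeathBirthLayer.
Variables (R : realType) (N : nat).
Hypothesis N_ge2 : (2 <= N)%N.

Definition dB_weight (F : 'I_N -> R) (i j : 'I_N) : R :=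
  N%:R^-1 * (F j / \sum_(k < N | k != i) F k).

Definition layer_exp (F : 'I_N -> R) (x : config N) (g : config N -> R) : R :=
  pairsum (fun i j => dB_weight F i j * g (cupd x i (x j))).

Lemma dB_step_exp F x g : \sum_y dB_step F x y * g y = layer_exp F x g.
Proof.
rewrite /dB_step; under eq_bigr do rewrite mulr_suml.
rewrite exchange_big; apply: eq_bigr => i _.
under eq_bigr do rewrite mulr_suml.
rewrite exchange_big; apply: eq_bigr => j _ /=.
rewrite (bigD1 (cupd x i (x j))) //= eqxx mulr1 [X in _ + X]big1 ?addr0 // => y /negPf ->.
by rewrite mulr0 mul0r.
Qed.

Lemma layer_expZ F x a g : layer_exp F x (fun y => a * g y) = a * layer_exp F x g.
Proof. by rewrite -pairsumZ; apply: pairsum_ext => i j _; rewrite mulrCA. Qed.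

Lemma layer_expMr F x g a : layer_exp F x (fun y => g y * a) = layer_exp F x g * a.
Proof. by rewrite -pairsumMr; apply: pairsum_ext => i j _; rewrite mulrA. Qed.

Lemma N_gt0 : (0 < N)%N.
Proof. exact: leq_trans N_ge2. Qed.

Lemma natrN_gt0 : 0 < N%:R :> R.
Proof. by rewrite ltr0n N_gt0. Qed.

Lemma natrN_sub1_gt0 : 0 < N%:R - 1 :> R.
Proof. by rewrite subr_gt0 ltr1n. Qed.

Lemma sum_neq_gt0 (F : 'I_N -> R) i : (forall k, 0 < F k) -> 0 < \sum_(k < N | k != i) F k.
Proof.
move=> F_gt0; have [j ji] : exists j : 'I_N, j != i.
  have [j_lt k_lt] : (0 < N)%N /\ (1 < N)%N by split; [exact: N_gt0 | exact: N_ge2].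
  case: (eqVneq i (Ordinal j_lt)) => [->|]; last by exists (Ordinal j_lt); rewrite eq_sym.
  by exists (Ordinal k_lt).
by rewrite (bigD1 j) //= ltr_wpDr ?F_gt0 // sumr_ge0 // => k _; exact: ltW.
Qed.

Lemma dB_weight_ge0 F i j : (forall k, 0 < F k) -> 0 <= dB_weight F i j.
Proof.
move=> F_gt0; rewrite mulr_ge0 ?invr_ge0 ?ler0n // divr_ge0 //; first exact: ltW.
exact/ltW/sum_neq_gt0.
Qed.

Lemma dB_step_ge0 (F : 'I_N -> R) (x y : config N) :
  (forall k, 0 < F k) -> 0 <= dB_step F x y.
Proof.
move=> F_gt0; do 2![apply: sumr_ge0 => ? _]; apply: mulr_ge0 => //.
exact: dB_weight_ge0.
Qed.

Lemma pairsum_dB_weight F : (forall k, 0 < F k) -> pairsum (dB_weight F) = 1.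
Proof.
move=> F_gt0; rewrite /pairsum; under eq_bigr => i _.
  rewrite -mulr_sumr -mulr_suml mulfV ?mulr1; last exact/lt0r_neq0/sum_neq_gt0.
  over.
by rewrite sumr_const card_ord -[_ *+ _]mulr_natr mulVf // pnatr_eq0 -lt0n N_gt0.
Qed.

Lemma layer_exp_cst F x a : (forall k, 0 < F k) -> layer_exp F x (fun=> a) = a.
Proof. by move=> F_gt0; rewrite /layer_exp pairsumMr pairsum_dB_weight ?mul1r. Qed.

Lemma dB_step_cvg (T : Type) (D : set_system T) (FD : Filter D)
    (F : T -> 'I_N -> R) (F0 : 'I_N -> R) (x y : config N) :
  (forall k, 0 < F0 k) -> (forall k, F d k @[d --> D] --> F0 k) ->
  dB_step (F d) x y @[d --> D] --> dB_step F0 x y.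
Proof.
move=> F0_gt0 F_cvg.
apply: cvg_sumr => i; apply: cvg_sumr => j; apply: cvgMr_tmp; apply: cvgMl_tmp.
apply: cvgM; first exact: F_cvg.
by apply: cvgV; [exact/lt0r_neq0/sum_neq_gt0 | exact: cvg_sumr].
Qed.

Lemma layer_exp_neutral x g :
  layer_exp (fun=> 1) x g = (N%:R * (N%:R - 1))^-1 * pairsum (fun i j => g (cupd x i (x j))).
Proof.
rewrite -pairsumZ; apply: pairsum_ext => i j _; congr (_ * _).
by rewrite /dB_weight sum_neq sumr_const card_ord div1r invfM.
Qed.

Definition ind (x : config N) (k : 'I_N) : R := (x k)%:R.

Definition ntrue (x : config N) : R := \sum_k ind x k.

Lemma ind_cupd x i v k : ind (cupd x i v) k = if k == i then v%:R else ind x k.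
Proof. by rewrite /ind ffunE; case: ifP. Qed.

Lemma ntrue_cupd x i v : ntrue (cupd x i v) = ntrue x - ind x i + v%:R.
Proof.
rewrite /ntrue (bigD1 i) //= [in RHS](bigD1 i) //= ind_cupd eqxx.
rewrite (eq_bigr (ind x)) => [|k /negPf ki]; last by rewrite ind_cupd ki.
by ring.
Qed.

Lemma pairsum_ind_cupd x k :
  pairsum (fun i j => ind (cupd x i (x j)) k) = ((N%:R - 1) ^+ 2 - 1) * ind x k + ntrue x.
Proof.
rewrite /pairsum (bigD1 k) //=.
under eq_bigr do rewrite ind_cupd eqxx.
rewrite sum_neq -/(ntrue x).
under eq_bigr => i ik.
  under eq_bigr do rewrite ind_cupd eq_sym (negPf ik).
  rewrite sum_neq sumr_const card_ord.
  over.
rewrite sum_neq sumr_const card_ord; ring.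
Qed.

Lemma layer_exp_neutral_ind x k : layer_exp (fun=> 1) x (fun y => ind y k) =
  (N%:R - 2) / (N%:R - 1) * ind x k + ntrue x / (N%:R * (N%:R - 1)).
Proof.
rewrite layer_exp_neutral pairsum_ind_cupd.
have N_neq0 := lt0r_neq0 natrN_gt0; have N1_neq0 := lt0r_neq0 natrN_sub1_gt0.
by field; rewrite N_neq0 N1_neq0.
Qed.

Lemma ind_sqr x k : ind x k * ind x k = ind x k.
Proof. by rewrite /ind; case: (x k); rewrite ?mulr0 ?mulr1. Qed.

Lemma cov_ind_self x : cov (ind x) (ind x) = ntrue x * (N%:R - ntrue x).
Proof. by rewrite /cov; under eq_bigr do rewrite ind_sqr; rewrite -/(ntrue x); ring. Qed.

Lemma ntrue_mulC x : ntrue x * (N%:R - ntrue x) = \sum_k \sum_l ind x k * (1 - ind x l).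
Proof.
under eq_bigr do rewrite -mulr_sumr sumrB sumr_const card_ord -/(ntrue x).
by rewrite -mulr_suml.
Qed.

Definition fixated (x : config N) := [forall k, x k] || [forall k, ~~ x k].

Lemma cupd_fixated x i j : fixated x -> cupd x i (x j) = x.
Proof.
move=> x_fix; apply/ffunP => k; rewrite ffunE; case: eqP => // ->.
by case/orP: x_fix => /forallP x_cst; move: (x_cst i) (x_cst j); case: (x i); case: (x j).
Qed.

Lemma layer_exp_fixated F x g :
  (forall k, 0 < F k) -> fixated x -> layer_exp F x g = g x.
Proof.
move=> F_gt0 x_fix; rewrite -[RHS](layer_exp_cst x (g x) F_gt0).
by apply: pairsum_ext => i j _; rewrite cupd_fixated.
Qed.

Lemma ind_fixated x : fixated x -> ind x = fun=> ([forall k, x k] : bool)%:R.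
Proof.
case/orP=> /[dup] x_cst /forallP x_k; apply: funext => k; rewrite /ind.
  by rewrite x_k x_cst.
have -> : [forall k, x k] = false.
  by apply/negP => /forallP /(_ (Ordinal N_gt0)); apply/negP; exact: x_k.
by rewrite (negPf (x_k k)).
Qed.

Lemma ntrue_fixated x : fixated x -> ntrue x = ([forall k, x k] : bool)%:R * N%:R.
Proof. by move=> x_fix; rewrite /ntrue (ind_fixated x_fix) sumr_const card_ord mulr_natr. Qed.

Lemma ind_mulC_ge0 x k l : 0 <= ind x k * (1 - ind x l).
Proof. by rewrite /ind; case: (x k); case: (x l); rewrite /= ?subrr ?subr0 ?mulr0 ?mulr1. Qed.

Lemma ntrue_mulC_ge0 x : 0 <= ntrue x * (N%:R - ntrue x).
Proof. by rewrite ntrue_mulC; do 2![apply: sumr_ge0 => ? _]; exact: ind_mulC_ge0. Qed.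

Lemma ntrue_mulC_ge1 x : ~~ fixated x -> 1 <= ntrue x * (N%:R - ntrue x).
Proof.
rewrite negb_or !negb_forall => /andP[/existsP[j xj] /existsP[i]]; rewrite negbK => xi.
rewrite ntrue_mulC (bigD1 i) //= (bigD1 j) //= -addrA.
have -> : ind x i * (1 - ind x j) = 1 by rewrite /ind xi (negPf xj) subr0 mulr1.
rewrite lerDl; apply: addr_ge0; first by apply: sumr_ge0 => l _; exact: ind_mulC_ge0.
by do 2![apply: sumr_ge0 => ? _]; exact: ind_mulC_ge0.
Qed.

End DeathBirthLayer.

Arguments ind {R N} x k.
Arguments ntrue {R N} x.
Arguments natrN_gt0 {R N}.
Arguments natrN_sub1_gt0 {R N}.

Section TwoLayerProcess.
Variables (R : realType) (N : nat) (b c r : R).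
Hypothesis N_ge2 : (2 <= N)%N.

Local Notation fec := (fecundity b c r).
Local Notation K d := (trans b c r d).

Definition fecundity_pos (d : R) := forall (s : state N) k, 0 < fec d s k.

Lemma kexp_trans d (f : state N -> R) (s : state N) : kexp (K d) f s =
  layer_exp (fec d s) s.1 (fun x => layer_exp (fec d s) s.2 (fun y => f (x, y))).
Proof.
rewrite /kexp /trans.
have -> : \sum_t dB_step (fec d s) s.1 t.1 * dB_step (fec d s) s.2 t.2 * f t =
    \sum_x \sum_y dB_step (fec d s) s.1 x * (dB_step (fec d s) s.2 y * f (x, y)).
  by rewrite pair_bigA; apply: eq_bigr => -[x y] _; rewrite mulrA.
by under eq_bigr do rewrite -mulr_sumr dB_step_exp; rewrite dB_step_exp.
Qed.

Lemma kexp_trans_prod d (f g : config N -> R) (s : state N) :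
  kexp (K d) (fun t => f t.1 * g t.2) s = layer_exp (fec d s) s.1 f * layer_exp (fec d s) s.2 g.
Proof.
rewrite kexp_trans -layer_expMr; congr layer_exp; apply: funext => x.
by rewrite -layer_expZ.
Qed.

Lemma kexp_trans_layer1 d (f : config N -> R) (s : state N) : fecundity_pos d ->
  kexp (K d) (fun t => f t.1) s = layer_exp (fec d s) s.1 f.
Proof.
move=> fec_pos; rewrite kexp_trans; congr layer_exp; apply: funext => x.
exact: (layer_exp_cst N_ge2 s.2 (f x) (fec_pos s)).
Qed.

Lemma trans_ge0 d (s t : state N) : fecundity_pos d -> 0 <= K d s t.
Proof. by move=> fec_pos; apply: mulr_ge0; apply: dB_step_ge0. Qed.

Lemma trans_sum1 d (s : state N) : fecundity_pos d -> \sum_t K d s t = 1.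
Proof.
move=> fec_pos; have := kexp_trans_layer1 (fun=> 1) s fec_pos.
by rewrite (layer_exp_cst N_ge2 _ _ (fec_pos s)) /kexp; under eq_bigr do rewrite mulr1.
Qed.

Lemma kexp_trans_fixated d (f : state N -> R) (s : state N) a :
  fecundity_pos d -> fixated s.1 -> (forall y, f (s.1, y) = a) -> kexp (K d) f s = a.
Proof.
move=> fec_pos s1_fix f_a.
rewrite kexp_trans (layer_exp_fixated N_ge2 _ (fec_pos s) s1_fix).
by under eq_fun do rewrite f_a; exact: layer_exp_cst.
Qed.

Lemma fecundity0 (s : state N) : fec 0 s = fun=> 1.
Proof. by apply: funext => k; rewrite /fecundity mul0r addr0. Qed.

Lemma fecundity_pos0 : fecundity_pos 0.
Proof. by move=> s k; rewrite fecundity0 ltr01. Qed.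

Lemma fecundity_cvg (s : state N) k : fec d s k @[d --> (0 : R)] --> fec 0 s k.
Proof. by apply: cvgD; [exact: cvg_cst | apply: cvgMr_tmp; exact: cvg_id]. Qed.

Lemma kexp_trans_cvg (f : state N -> R) (s : state N) :
  kexp (K d) f s @[d --> (0 : R)] --> kexp (K 0) f s.
Proof.
rewrite /kexp; apply: cvg_sumr => t; apply: cvgMr_tmp.
apply: cvgM; apply: dB_step_cvg => // k.
all: first [exact: fecundity_pos0 | exact: fecundity_cvg].
Qed.

End TwoLayerProcess.

Section Observables.
Variables (R : realType) (N : nat) (b c r : R).
Hypothesis N_ge2 : (2 <= N)%N.

Local Notation fec := (fecundity b c r).
Local Notation K d := (trans b c r d).
Local Notation u := (payoff b c r).

Let N_neq0 : N%:R != 0 :> R := lt0r_neq0 (natrN_gt0 N_ge2).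
Let N1_neq0 : N%:R - 1 != 0 :> R := lt0r_neq0 (natrN_sub1_gt0 N_ge2).

Definition freq (s : state N) : R := ntrue s.1 / N%:R.
Definition discord (s : state N) : R := ntrue s.1 * (N%:R - ntrue s.1).
Definition covar (s : state N) : R := cov (ind s.1) (ind s.2).

Lemma neutral_discord (s : state N) :
  kexp (K 0) discord s = (1 - 2 / (N%:R * (N%:R - 1))) * discord s.
Proof.
rewrite (kexp_trans_layer1 N_ge2 (fun x => ntrue x * (N%:R - ntrue x))) ?fecundity0;
  last exact: fecundity_pos0.
rewrite layer_exp_neutral /discord; set p := ntrue s.1; set x := s.1.
rewrite (pairsum_ext (G' := fun i j =>
    p * (N%:R - p) + (N%:R - 2 * p) * (ind x j - ind x i) - (ind x j - ind x i) ^+ 2));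
  last by move=> i j _; rewrite ntrue_cupd -/p; ring.
rewrite pairsumB pairsumD pairsum_cst pairsumZ pairsum_diff pairsum_sqr_diff cov_ind_self -/p.
by field; rewrite N_neq0 N1_neq0.
Qed.

Lemma kexp_trans_covar d (s : state N) : kexp (K d) covar s =
  cov (fun k => layer_exp (fec d s) s.1 (fun x => ind x k))
      (fun k => layer_exp (fec d s) s.2 (fun y => ind y k)).
Proof.
have -> : covar = fun t => \sum_k \sum_l (ind t.1 k * ind t.2 k - ind t.1 k * ind t.2 l).
  by apply: funext => t; rewrite /covar covE.
rewrite kexp_sum covE; apply: eq_bigr => k _; rewrite kexp_sum; apply: eq_bigr => l _.
by rewrite kexpB (kexp_trans_prod b c r d (ind^~ k) (ind^~ k))
  (kexp_trans_prod b c r d (ind^~ k) (ind^~ l)).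
Qed.

Lemma neutral_covar (s : state N) :
  kexp (K 0) covar s = ((N%:R - 2) / (N%:R - 1)) ^+ 2 * covar s.
Proof.
have site (x : config N) : (fun k => layer_exp (fun=> 1) x (fun y => ind y k : R)) =
    (fun k => (N%:R - 2) / (N%:R - 1) * ind x k + ntrue x / (N%:R * (N%:R - 1))).
  by apply: funext => k; exact: layer_exp_neutral_ind.
by rewrite kexp_trans_covar fecundity0 !site cov_affine expr2.
Qed.

Lemma payoffE (s : state N) : u s = fun k =>
  - (c + b / (N%:R - 1)) * ind s.1 k + (r - 1) * ind s.2 k + (b / (N%:R - 1) * ntrue s.1 + 1).
Proof. by apply: funext => k; rewrite /payoff sum_neq /(ntrue _) /(ind _); ring. Qed.

Lemma cov_payoff (s : state N) :
  cov (u s) (ind s.1) = - (c + b / (N%:R - 1)) * discord s + (r - 1) * covar s.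
Proof. by rewrite payoffE cov_affine_l cov_ind_self covC. Qed.

Definition others_payoff (s : state N) (i : 'I_N) : R := \sum_(k < N | k != i) u s k.

Lemma sum_neq_fecundity d (s : state N) i :
  \sum_(k < N | k != i) fec d s k = N%:R - 1 + d * others_payoff s i.
Proof. by rewrite /fecundity big_split /= -mulr_sumr sum_neq sumr_const card_ord. Qed.

Definition drift_rate (s : state N) (d : R) : R := N%:R ^- 2 * pairsum (fun i j =>
  ((N%:R - 1) * u s j - others_payoff s i) / ((N%:R - 1) * (N%:R - 1 + d * others_payoff s i))
  * (ind s.1 j - ind s.1 i)).

Lemma drift_freq d (s : state N) : fecundity_pos N b c r d ->
  kexp (K d) freq s - freq s = d * drift_rate s d.
Proof.
move=> fec_pos.
rewrite /freq (kexp_trans_layer1 N_ge2 (fun x => ntrue x / N%:R)) // /layer_exp.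
have -> : ntrue s.1 / N%:R = pairsum (dB_weight (fec d s)) * (ntrue s.1 / N%:R).
  by rewrite (pairsum_dB_weight N_ge2 (fec_pos s)) mul1r.
rewrite -pairsumMr -pairsumB.
rewrite (pairsum_ext (G' := fun i j => d * (N%:R ^- 2 *
    (((N%:R - 1) * u s j - others_payoff s i) / ((N%:R - 1) * (N%:R - 1 + d * others_payoff s i))
    * (ind s.1 j - ind s.1 i))) + N%:R ^- 2 / (N%:R - 1) * (ind s.1 j - ind s.1 i))).
  by rewrite pairsumD !pairsumZ pairsum_diff mulr0 addr0.
move=> i j _; rewrite /dB_weight sum_neq_fecundity ntrue_cupd /fecundity.
have S_neq0 : N%:R - 1 + d * others_payoff s i != 0.
  by rewrite -sum_neq_fecundity; exact/lt0r_neq0/(sum_neq_gt0 N_ge2).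
by field; rewrite N_neq0 N1_neq0 S_neq0.
Qed.

Definition selection (s : state N) : R := (N%:R - 2) / (N%:R ^+ 2 * (N%:R - 1) ^+ 2) *
  (- (c + b / (N%:R - 1)) * discord s + (r - 1) * covar s).

Lemma drift_rate0 (s : state N) : drift_rate s 0 = selection s.
Proof.
rewrite /drift_rate (pairsum_ext (G' := fun i j => ((N%:R - 1) ^+ 2)^-1 *
    (((N%:R - 1) * u s j + u s i - \sum_k u s k) * (ind s.1 j - ind s.1 i)))).
  rewrite pairsumZ pairsum_weighted_diff cov_payoff /selection.
  by field; rewrite N_neq0 N1_neq0.
move=> i j _; rewrite /others_payoff sum_neq mul0r addr0.
by field; rewrite N1_neq0.
Qed.

Lemma drift_rate_cvg (s : state N) : drift_rate s d @[d --> (0 : R)] --> drift_rate s 0.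
Proof.
rewrite /drift_rate /pairsum; apply: cvgMl_tmp; apply: cvg_sumr => i; apply: cvg_sumr => j.
apply: cvgMr_tmp; apply: cvgMl_tmp; apply: cvgV; first by rewrite mul0r addr0 mulf_neq0.
by apply: cvgMl_tmp; apply: cvgD; [exact: cvg_cst | apply: cvgMr_tmp; exact: cvg_id].
Qed.

End Observables.

Section Perturbation.
Variables (R : realType) (N : nat) (b c r : R).
Hypothesis N_ge2 : (2 <= N)%N.

Local Notation K d := (trans b c r d).
Local Notation freq := (@freq R N).
Local Notation discord := (@discord R N).
Local Notation covar := (@covar R N).
Local Notation selection := (selection b c r).

Let N_neq0 : N%:R != 0 :> R := lt0r_neq0 (natrN_gt0 N_ge2).
Let N1_neq0 : N%:R - 1 != 0 :> R := lt0r_neq0 (natrN_sub1_gt0 N_ge2).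
Let N23_neq0 : 2 * N%:R - 3 != 0 :> R.
Proof.
have := natrN_sub1_gt0 (R := R) N_ge2; have : 2 <= N%:R :> R by rewrite ler_nat.
by move=> *; apply: lt0r_neq0; lra.
Qed.

(* discord and covar are eigenfunctions of the neutral kernel, which makes the
   Poisson equation for the selection term explicitly solvable. *)
Definition corrector (s : state N) : R :=
  - (N%:R - 2) * (c + b / (N%:R - 1)) / (2 * N%:R * (N%:R - 1)) * discord s
  + (N%:R - 2) * (r - 1) / (N%:R ^+ 2 * (2 * N%:R - 3)) * covar s.

Lemma neutral_corrector s : kexp (K 0) corrector s - corrector s = - selection s.
Proof.
rewrite /corrector kexpD !kexpZ neutral_discord // neutral_covar // /selection.
by field; rewrite N_neq0 N1_neq0 N23_neq0.
Qed.

Definition approx_fix (d : R) (s : state N) : R := freq s + d * corrector s.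

Definition drift_error (s : state N) (d : R) : R :=
  drift_rate b c r s d + (kexp (K d) corrector s - corrector s).

Lemma drift_approx_fix d s : fecundity_pos N b c r d ->
  kexp (K d) (approx_fix d) s - approx_fix d s = d * drift_error s d.
Proof.
move=> fec_pos; rewrite /approx_fix kexpD kexpZ /drift_error [RHS]mulrDr.
by rewrite -(drift_freq N_ge2 _ fec_pos); ring.
Qed.

Lemma drift_error_cvg s : drift_error s d @[d --> (0 : R)] --> 0.
Proof.
have err_lim : drift_error s d @[d --> (0 : R)] -->
    drift_rate b c r s 0 + (kexp (K 0) corrector s - corrector s).
  apply: cvgD; first exact: drift_rate_cvg.
  by apply: cvgB; [exact: kexp_trans_cvg | exact: cvg_cst].
by rewrite drift_rate0 // neutral_corrector subrr in err_lim.
Qed.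

Lemma fecundity_pos_near0 : \forall d \near (0 : R)^'+, fecundity_pos N b c r d.
Proof.
apply: filter_forall => s; apply: filter_forall => k.
apply: (cvgr_gt _ (cvg_at_right_filter (@fecundity_cvg R N b c r s k))).
by rewrite /fecundity mul0r addr0 ltr01.
Qed.

Definition lyap (s : state N) : R := N%:R * (N%:R - 1) * discord s.

Lemma neutral_lyap_drift t : lyap t - kexp (K 0) lyap t = 2 * discord t.
Proof. by rewrite /lyap kexpZ neutral_discord //; field; rewrite N_neq0 N1_neq0. Qed.

Lemma lyap_drift_near0 : \forall d \near (0 : R)^'+,
  forall t, ~~ fixated t.1 -> 1 <= lyap t - kexp (K d) lyap t.
Proof.
apply: filter_forall => t; case: (boolP (fixated t.1)) => [t_fix|t_mix].
  by apply: nearW => d /negP[].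
have drift_lim : lyap t - kexp (K d) lyap t @[d --> (0 : R)^'+] --> 2 * discord t.
  rewrite -neutral_lyap_drift; apply: cvg_at_right_filter.
  by apply: cvgB; [exact: cvg_cst | exact: kexp_trans_cvg].
have one_lt : 1 < 2 * discord t.
  by have := ntrue_mulC_ge1 R t_mix; rewrite -/(discord t); lra.
by apply: filterS (cvgr_gt _ drift_lim 1 one_lt) => d /ltW.
Qed.

Lemma discord_fixated s : fixated s.1 -> discord s = 0.
Proof.
by move=> s_fix; rewrite /discord ntrue_fixated //; case: [forall k, s.1 k];
  rewrite ?mul1r ?subrr ?mulr0 ?mul0r.
Qed.

Lemma covar_fixated s : fixated s.1 -> covar s = 0.
Proof. by move=> s_fix; rewrite /covar ind_fixated // cov_cstl. Qed.

Lemma corrector_fixated s : fixated s.1 -> corrector s = 0.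
Proof.
by move=> s_fix; rewrite /corrector discord_fixated // covar_fixated // !mulr0 addr0.
Qed.

End Perturbation.

Section Fixation.
Variables (R : realType) (N : nat) (b c r : R).
Hypothesis N_ge2 : (2 <= N)%N.

Local Notation K d := (@trans R N b c r d).
Local Notation freq := (@freq R N).
Local Notation discord := (@discord R N).
Local Notation corrector := (@corrector R N b c r).
Local Notation approx_fix := (@approx_fix R N b c r).
Local Notation drift_error := (@drift_error R N b c r).
Local Notation lyap := (@lyap R N).

Lemma transn_kexp d n (s : state N) (f : state N -> R) :
  \sum_t transn b c r d n s t * f t = iter n (kexp (K d)) f s.
Proof.
elim: n s => [|n IH] s /=.
  rewrite (bigD1 s) //= eqxx mul1r big1 ?addr0 // => t ts.
  by rewrite eq_sym (negPf ts) mul0r.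
rewrite /kexp; under [RHS]eq_bigr do rewrite -IH mulr_sumr.
rewrite exchange_big; apply: eq_bigr => t _ /=.
by rewrite mulr_suml; apply: eq_bigr => u _; rewrite mulrA.
Qed.

Definition allC (t : state N) : bool := [forall i, t.1 i].

Lemma rho1E d (s : state N) :
  rho1 b c r d s = limn (fun n => iter n (kexp (K d)) (fun t => (allC t)%:R) s).
Proof.
rewrite /rho1; congr (limn _); apply: funext => n.
rewrite /allC_prob -transn_kexp big_mkcond; apply: eq_bigr => t _.
by rewrite /allC; case: ifP; rewrite ?mulr1 ?mulr0.
Qed.

Lemma lyap_ge0 (t : state N) : 0 <= lyap t.
Proof.
rewrite /lyap mulr_ge0 ?ntrue_mulC_ge0 // mulr_ge0 ?ler0n //.
exact/ltW/natrN_sub1_gt0.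
Qed.

Lemma rho1_approx d (s : state N) : fecundity_pos N b c r d ->
  (forall t, ~~ fixated t.1 -> 1 <= lyap t - kexp (K d) lyap t) ->
  `|rho1 b c r d s - approx_fix d s| <=
    (\sum_t `|kexp (K d) (approx_fix d) t - approx_fix d t|) * lyap s.
Proof.
move=> fec_pos lyap_drift; rewrite rho1E.
have K_ge0 t u : 0 <= K d t u := trans_ge0 N_ge2 t u fec_pos.
have K_sum1 t : \sum_u K d t u = 1 := trans_sum1 N_ge2 t fec_pos.
have absorbed f t a : fixated t.1 -> (forall y, f (t.1, y) = a) -> kexp (K d) f t = a.
  exact: kexp_trans_fixated.
have allC_fixated t : allC t -> fixated t.1 by move=> t_allC; apply/orP; left.
apply: (hitting_prob_approx K_ge0 K_sum1 (T := fun t => ~~ fixated t.1)) => t /=.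
- case: (boolP (fixated t.1)) => [t_fix|_] /=.
    by rewrite (absorbed _ _ 0 t_fix) // => y; rewrite t_fix.
  have kexp1 : kexp (K d) (fun=> 1) t = 1 := iter_kexp_cst K_sum1 1 1 t.
  rewrite -[X in _ <= X]kexp1; apply: (kexp_le K_ge0) => u.
  by case: (~~ fixated u.1); rewrite ?lexx ?ler01.
- case: (boolP (allC t)) => [t_allC|_] /=.
    rewrite (absorbed _ _ 1 (allC_fixated _ t_allC)) // => y.
    by move: t_allC; rewrite /allC => ->.
  by apply: sumr_ge0 => u _; rewrite mulr_ge0.
- move=> /negPn t_fix; apply: absorbed => // y.
  by rewrite /approx_fix !corrector_fixated.
- move=> /negPn t_fix; rewrite /approx_fix corrector_fixated // mulr0 addr0.
  by rewrite /freq ntrue_fixated // mulfK // lt0r_neq0 // natrN_gt0.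
- exact: lyap_ge0.
- case: (boolP (fixated t.1)) => [t_fix|t_mix]; last exact: lyap_drift.
  rewrite (absorbed _ _ 0 t_fix) => [|y]; last by rewrite /lyap discord_fixated ?mulr0.
  by rewrite /lyap discord_fixated ?mulr0 ?subr0.
Qed.

Lemma rho1_neutral (s : state N) : rho1 b c r 0 s = freq s.
Proof.
have lyap_drift t : ~~ fixated t.1 -> 1 <= lyap t - kexp (K 0) lyap t.
  move=> t_mix; rewrite neutral_lyap_drift //.
  by have := ntrue_mulC_ge1 R t_mix; rewrite -/(discord t); lra.
have drift0 t : kexp (K 0) (approx_fix 0) t - approx_fix 0 t = 0.
  by rewrite drift_approx_fix ?mul0r //; exact: fecundity_pos0.
have := rho1_approx s (fecundity_pos0 b c r) lyap_drift.
rewrite big1 => [|t _]; last by rewrite drift0 normr0.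
by rewrite mul0r normr_le0 subr_eq0 /approx_fix mul0r addr0 => /eqP.
Qed.

Lemma rho1_dquot_bound_near0 (s : state N) : \forall h \near (0 : R)^'+,
  `|h^-1 * (rho1 b c r h s - rho1 b c r 0 s) - corrector s| <=
    (\sum_t `|drift_error t h|) * lyap s.
Proof.
near=> h.
have h_gt0 : 0 < h by near: h; exact: nbhs_right_gt.
have fec_pos : fecundity_pos N b c r h by near: h; exact: fecundity_pos_near0.
have lyap_drift : forall t, ~~ fixated t.1 -> 1 <= lyap t - kexp (K h) lyap t.
  by near: h; exact: lyap_drift_near0.
have := rho1_approx s fec_pos lyap_drift.
under eq_bigr do rewrite drift_approx_fix // normrM gtr0_norm //.
rewrite -mulr_sumr rho1_neutral /approx_fix => bound.
have -> : h^-1 * (rho1 b c r h s - freq s) - corrector s =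
    h^-1 * (rho1 b c r h s - (freq s + h * corrector s)) by field; rewrite gt_eqF.
rewrite normrM gtr0_norm ?invr_gt0 // -(ler_pM2l h_gt0) mulrA mulfV ?gt_eqF //.
by rewrite mul1r mulrA.
Unshelve. all: by end_near.
Qed.

Theorem rho1_rderivative0 (s : state N) :
  h^-1 * (rho1 b c r h s - rho1 b c r 0 s) @[h --> (0 : R)^'+] --> corrector s.
Proof.
set E := fun h => (\sum_t `|drift_error t h|) * lyap s.
have sum_cvg :
    \sum_t `|drift_error t h| @[h --> (0 : R)^'+] --> \sum_(t : state N) `|0 : R|.
  apply: cvg_sumr => t; apply: cvg_norm; apply: cvg_at_right_filter.
  exact: drift_error_cvg.
rewrite big1 in sum_cvg => [|t _]; last exact: normr0.
have E_cvg0 : E h @[h --> (0 : R)^'+] --> 0.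
  by rewrite -[X in _ --> X](mul0r (lyap s)); apply: cvgMr_tmp.
have lower : corrector s - E h @[h --> (0 : R)^'+] --> corrector s.
  by rewrite -[X in _ --> X]subr0; apply: cvgB => //; exact: cvg_cst.
have upper : corrector s + E h @[h --> (0 : R)^'+] --> corrector s.
  by rewrite -[X in _ --> X]addr0; apply: cvgD => //; exact: cvg_cst.
apply: (squeeze_cvgr _ lower upper).
by apply: filterS (rho1_dquot_bound_near0 s) => h; rewrite ler_distl.
Qed.

End Fixation.

Section SingleMutant.
Variables (R : realType) (N : nat) (b c r : R).
Hypothesis N_ge3 : (3 <= N)%N.

Let N_ge2 : (2 <= N)%N := ltnW N_ge3.
Let xi := xi_single N.

Lemma ntrue_xi : ntrue xi.1 = 1 :> R.
Proof.
rewrite /ntrue (bigD1 (Ordinal (N_gt0 N_ge2))) //= big1 ?addr0 => [|k k_neq0].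
  by rewrite /ind ffunE.
by rewrite /ind ffunE; case: eqP => // k0; case/eqP: k_neq0; exact: val_inj.
Qed.

Lemma corrector_xi : @corrector R N b c r xi = (N%:R - 1) *
  (- (N%:R - 2) * (c + b / (N%:R - 1)) / (2 * N%:R * (N%:R - 1))
   + (N%:R - 2) * (r - 1) / (N%:R ^+ 2 * (2 * N%:R - 3))).
Proof.
by rewrite /corrector /covar /discord (_ : xi.2 = xi.1) // cov_ind_self ntrue_xi mul1r; ring.
Qed.

Lemma corrector_xi_gt0 : 0 < c -> (0 < @corrector R N b c r xi <->
  b / c < - (N%:R - 1) + (r - 1) / c * (2 * (N%:R - 1) ^+ 2 / (N%:R * (2 * N%:R - 3)))).
Proof.
move=> c_gt0.
have N_gt2 : 2 < N%:R :> R by rewrite ltr_nat.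
have N_neq0 : N%:R != 0 :> R by apply: lt0r_neq0; lra.
have N1_neq0 : N%:R - 1 != 0 :> R by apply: lt0r_neq0; lra.
have N23_neq0 : 2 * N%:R - 3 != 0 :> R by apply: lt0r_neq0; lra.
set rhs := - (N%:R - 1) + _.
have -> : @corrector R N b c r xi =
    (N%:R - 2) / (2 * N%:R * (N%:R - 1)) * (c * (rhs - b / c)).
  by rewrite corrector_xi /rhs; field; rewrite gt_eqF // N_neq0 N1_neq0 N23_neq0.
have factor_gt0 : 0 < (N%:R - 2) / (2 * N%:R * (N%:R - 1)) :> R.
  by apply: divr_gt0; [lra | apply: mulr_gt0; [apply: mulr_gt0 | ]; lra].
by rewrite pmulr_rgt0 // pmulr_rgt0 // subr_gt0.
Qed.

End SingleMutant.

Theorem mainTheorem4 (R : realType) (N : nat) (b c r : R) :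
  (3 <= N)%N -> 0 <= r -> 0 < c ->
  exists D : R,
    ((fun h : R => h^-1 * (rho1 b c r h (xi_single N)
                           - rho1 b c r 0 (xi_single N))) x @[x --> 0^'+] --> D)
    /\
    (0 < D <->
       b / c < - (N%:R - 1)
               + (r - 1) / c * (2 * (N%:R - 1) ^+ 2 / (N%:R * (2 * N%:R - 3)))).
Proof.
move=> N_ge3 _ c_gt0; exists (corrector b c r (xi_single N)); split.
  exact: rho1_rderivative0 (ltnW N_ge3) _.
exact: corrector_xi_gt0.
Qed.
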